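(* Consider the four-dimensional pp-wave spacetime with coordinates $(u,v,x,y)$ and metric $ds^2=H(u,x,y)\,du^2+2\,du\,dv+dx^2+dy^2$, where $H$ is an arbitrary smooth function of $u,x,y$. Then: (i) the 1-form $u\,du$ (dual to $u\,\partial_v$) is a closed affine vector field, i.e. a closed rank-1 antisymmetric affine tensor field; (ii) $du\wedge dx$ and $du\wedge dy$ are Killing–Yano tensors; (iii) $u\,du\wedge dx$ and $u\,du\wedge dy$ are proper rank-2 antisymmetric affine tensor fields; (iv) $u\,du\wedge dx\wedge dy$ is a rank-3 antisymmetric affine tensor field.
   Context: $\nabla$ is the Levi-Civita connection; symmetrization $(\cdots)$ over $k$ indices has weight $1/k!$. A rank-$p$ antisymmetric affine tensor field is a $p$-form $f$ with $\nabla_\mu\nabla_{(\nu}f_{\rho_1)\rho_2\cdots\rho_p}=0$; it is closed if $df=0$, Killing–Yano if $\nabla_{(\mu}f_{\nu_1)\nu_2\cdots\nu_p}=0$, and proper if $\nabla_{(\mu}f_{\nu_1)\nu_2\cdots\nu_p}\neq0$. For $p=1$ such a field is (the dual of) an affine vector field. *)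

From Stdlib Require Import Reals Lra List Arith ClassicalEpsilon.
Import ListNotations.
Open Scope R_scope.

(** Points of R^4: coordinates p 0 = u, p 1 = v, p 2 = x, p 3 = y
    (coordinates >= 4 are never used). *)
Definition pt := nat -> R.

Definition upd (p : pt) (i : nat) (t : R) : pt :=
  fun j => if Nat.eq_dec j i then t else p j.

(** Partial derivative in direction i (classically chosen; it is the true
    partial derivative whenever that exists). *)
Definition pd (i : nat) (F : pt -> R) (p : pt) : R :=
  epsilon (inhabits 0) (fun l => derivable_pt_lim (fun t => F (upd p i t)) (p i) l).

Fixpoint iterpd (l : list nat) (F : pt -> R) : pt -> R :=
  match l with nil => F | i :: l' => pd i (iterpd l' F) end.

Definition lt4 (i : nat) : Prop := (i < 4)%nat.

Definition continuous4 (G : pt -> R) : Prop :=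
  forall p eps, 0 < eps -> exists delta, 0 < delta /\
    forall q, (forall i, lt4 i -> Rabs (q i - p i) < delta) -> Rabs (G q - G p) < eps.

Definition smooth4 (F : pt -> R) : Prop :=
  forall l : list nat, Forall lt4 l ->
    (forall p i, lt4 i -> exists d,
        derivable_pt_lim (fun t => iterpd l F (upd p i t)) (p i) d)
    /\ continuous4 (iterpd l F).

Definition Hf (H : R -> R -> R -> R) : pt -> R := fun p => H (p 0%nat) (p 2%nat) (p 3%nat).

Definition gmet (H : R -> R -> R -> R) (m n : nat) (p : pt) : R :=
  match m, n with
  | O, O => Hf H p
  | O, S O | S O, O | S (S O), S (S O) | S (S (S O)), S (S (S O)) => 1
  | _, _ => 0
  end.

Definition ginv (H : R -> R -> R -> R) (m n : nat) (p : pt) : R :=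
  match m, n with
  | S O, S O => - Hf H p
  | O, S O | S O, O | S (S O), S (S O) | S (S (S O)), S (S (S O)) => 1
  | _, _ => 0
  end.

Definition sum4 (F : nat -> R) : R := F 0%nat + F 1%nat + F 2%nat + F 3%nat.

(** Christoffel symbols of the Levi-Civita connection:
    Gam l m n = Gamma^l_{mn}. *)
Definition Gam (H : R -> R -> R -> R) (l m n : nat) (p : pt) : R :=
  / 2 * sum4 (fun s => ginv H l s p *
     (pd m (gmet H s n) p + pd n (gmet H s m) p - pd s (gmet H m n) p)).

(** Covariant tensor fields: components indexed by lists of coordinate indices. *)
Definition tfield := list nat -> pt -> R.

Fixpoint repl (l : list nat) (i x : nat) : list nat :=
  match l, i with
  | nil, _ => nil
  | _ :: t, 0%nat => x :: t
  | a :: t, S k => a :: repl t k x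
  end.

Fixpoint remove_nth (l : list nat) (i : nat) : list nat :=
  match l, i with
  | nil, _ => nil
  | _ :: t, 0%nat => t
  | a :: t, S k => a :: remove_nth t k
  end.

Definition sumR (l : list R) : R := fold_right Rplus 0 l.

Definition nabla (H : R -> R -> R -> R) (T : tfield) : tfield :=
  fun idx p => match idx with
  | nil => 0
  | m :: nu => pd m (T nu) p
      - sumR (map (fun i => sum4 (fun l => Gam H l m (nth i nu 0%nat) p * T (repl nu i l) p))
                  (seq 0 (length nu)))
  end.

Definition Sym01 (T : tfield) : tfield :=
  fun idx p => match idx with
  | a :: b :: r => / 2 * (T (a :: b :: r) p + T (b :: a :: r) p)
  | _ => T idx p
  end.

Definition extd (f : tfield) : tfield :=
  fun idx p => sumR (map (fun i => (-1) ^ i * pd (nth i idx 0%nat) (f (remove_nth idx i)) p)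
                         (seq 0 (length idx))).

Definition vanish (k : nat) (T : tfield) : Prop :=
  forall idx p, length idx = k -> Forall lt4 idx -> T idx p = 0.

Definition swapl (idx : list nat) (i j : nat) : list nat :=
  repl (repl idx i (nth j idx 0%nat)) j (nth i idx 0%nat).

Definition is_form (k : nat) (f : tfield) : Prop :=
  forall idx p i j, length idx = k -> Forall lt4 idx -> (i < j < k)%nat ->
    f (swapl idx i j) p = - f idx p.

Definition affine_form H (k : nat) (f : tfield) : Prop :=
  is_form k f /\ vanish (k + 2) (nabla H (Sym01 (nabla H f))).

Definition closed_form (k : nat) (f : tfield) : Prop := vanish (k + 1) (extd f).

Definition killing_yano H (k : nat) (f : tfield) : Prop :=
  is_form k f /\ vanish (k + 1) (Sym01 (nabla H f)).

Definition proper_form H (k : nat) (f : tfield) : Prop :=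
  ~ vanish (k + 1) (Sym01 (nabla H f)).

(** Components of wedge products of coordinate differentials. *)
Definition delta (a i : nat) : R := if Nat.eq_dec a i then 1 else 0.

Definition dx1 (a : nat) (idx : list nat) : R :=
  match idx with [i] => delta a i | _ => 0 end.

Definition dx2 (a b : nat) (idx : list nat) : R :=
  match idx with [i; j] => delta a i * delta b j - delta a j * delta b i | _ => 0 end.

Definition dx3 (a b c : nat) (idx : list nat) : R :=
  match idx with
  | [i; j; k] =>
      delta a i * (delta b j * delta c k - delta b k * delta c j)
    - delta a j * (delta b i * delta c k - delta b k * delta c i)
    + delta a k * (delta b i * delta c j - delta b j * delta c i)
  | _ => 0 end.

Definition u_du : tfield := fun idx p => p 0%nat * dx1 0 idx.
Definition du_dx : tfield := fun idx _ => dx2 0 2 idx.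
Definition du_dy : tfield := fun idx _ => dx2 0 3 idx.
Definition u_du_dx : tfield := fun idx p => p 0%nat * dx2 0 2 idx.
Definition u_du_dy : tfield := fun idx p => p 0%nat * dx2 0 3 idx.
Definition u_du_dx_dy : tfield := fun idx p => p 0%nat * dx3 0 2 3 idx.

(* In the pp-wave metric the Christoffel symbols are very sparse: Gamma^u_{mn} = 0, and
   Gamma^x_{mn}, Gamma^y_{mn} vanish unless m = n = u. Hence du, du∧dx, du∧dy and
   du∧dx∧dy are parallel, so the 2-forms among them are Killing–Yano. For a parallel form w
   the Leibniz rule gives nabla (u w) = du ⊗ w, and the symmetrization Sym (du ⊗ w) is again
   parallel; therefore nabla Sym nabla (u w) = 0, i.e. u w is affine, and it is proper as soon
   as Sym (du ⊗ w) has a nonzero component. Finally d(u du) = du ∧ du = 0. *)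

From Stdlib Require Import Reals Lra Lia List ClassicalEpsilon FunctionalExtensionality.
Import ListNotations.
Open Scope R_scope.

Arguments pd : simpl never.

Lemma pd_spec i F p l :
  derivable_pt_lim (fun t => F (upd p i t)) (p i) l -> pd i F p = l.
Proof.
  intro Hl. unfold pd.
  pose proof (epsilon_spec (inhabits 0)
    (fun l => derivable_pt_lim (fun t => F (upd p i t)) (p i) l) (ex_intro _ l Hl)) as E.
  exact (uniqueness_limite _ _ _ _ E Hl).
Qed.

Lemma pd_const i (c : R) p : pd i (fun _ => c) p = 0.
Proof. apply pd_spec, derivable_pt_lim_const. Qed.

Lemma pd_u_scale i (c : R) p : pd i (fun q => q 0%nat * c) p = delta 0 i * c.
Proof.
  apply pd_spec. unfold delta, upd.
  destruct (Nat.eq_dec 0 i) as [<-|Hi]; cbn.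
  - replace (fun t => t * c) with (mult_real_fct c id)
      by (apply functional_extensionality; intro t; unfold mult_real_fct, id; ring).
    replace (1 * c) with (c * 1) by ring.
    apply derivable_pt_lim_scal, derivable_pt_lim_id.
  - destruct (Nat.eq_dec 0 i); [congruence|].
    replace (0 * c) with 0 by ring. apply derivable_pt_lim_const.
Qed.

Lemma pd_v_Hf H p : pd 1 (Hf H) p = 0.
Proof. apply pd_spec. unfold Hf, upd. cbn. apply derivable_pt_lim_const. Qed.

Lemma pd_gmet H i m n p :
  pd i (gmet H m n) p = delta 0 m * delta 0 n * pd i (Hf H) p.
Proof.
  unfold gmet; destruct m as [|[|[|[|m]]]]; destruct n as [|[|[|[|n]]]]; cbn;
  rewrite ?pd_const; [ change (fun q : pt => Hf H q) with (Hf H) | .. ]; ring.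
Qed.

Lemma Gam_u H m n p : Gam H 0 m n p = 0.
Proof. unfold Gam, sum4, ginv. rewrite !pd_gmet, pd_v_Hf. cbn. ring. Qed.

Lemma Gam_transverse H a m n p : (a = 2 \/ a = 3)%nat ->
  Gam H a m n p = - / 2 * (delta 0 m * delta 0 n) * pd a (Hf H) p.
Proof. intros [-> | ->]; unfold Gam, sum4, ginv; rewrite !pd_gmet; cbn; ring. Qed.

Arguments Gam : simpl never.

Lemma sumR_map_scale {A} (c : R) (f : A -> R) l :
  sumR (map (fun i => c * f i) l) = c * sumR (map f l).
Proof.
  unfold sumR; induction l as [|a l IH]; cbn [map fold_right]; [ring | rewrite IH; ring].
Qed.

Lemma sumR_map_add {A} (f g : A -> R) l :
  sumR (map (fun i => f i + g i) l) = sumR (map f l) + sumR (map g l).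
Proof.
  unfold sumR; induction l as [|a l IH]; cbn [map fold_right]; [ring | rewrite IH; ring].
Qed.

Definition christoffel_sum H (T : tfield) (m : nat) (nu : list nat) (p : pt) : R :=
  sumR (map (fun i => sum4 (fun l => Gam H l m (nth i nu 0%nat) p * T (repl nu i l) p))
            (seq 0 (length nu))).

Lemma nabla_cons H T m nu p :
  nabla H T (m :: nu) p = pd m (T nu) p - christoffel_sum H T m nu p.
Proof. reflexivity. Qed.

Lemma christoffel_sum_ext H (T1 T2 : tfield) m nu p :
  (forall idx, T1 idx p = T2 idx p) ->
  christoffel_sum H T1 m nu p = christoffel_sum H T2 m nu p.
Proof.
  intro E. unfold christoffel_sum. f_equal. apply map_ext. intro i.
  unfold sum4. rewrite !E. reflexivity.
Qed.

Lemma christoffel_sum_scale H c (T : tfield) m nu p :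
  christoffel_sum H (fun idx q => c * T idx q) m nu p = c * christoffel_sum H T m nu p.
Proof.
  unfold christoffel_sum. rewrite <- sumR_map_scale. f_equal. apply map_ext.
  intro i. unfold sum4. ring.
Qed.

Lemma christoffel_sum_add H (T1 T2 : tfield) m nu p :
  christoffel_sum H (fun idx q => T1 idx q + T2 idx q) m nu p
  = christoffel_sum H T1 m nu p + christoffel_sum H T2 m nu p.
Proof.
  unfold christoffel_sum. rewrite <- sumR_map_add. f_equal. apply map_ext.
  intro i. unfold sum4. ring.
Qed.

Lemma christoffel_sum_cons H T m a nu p :
  christoffel_sum H T m (a :: nu) p
  = sum4 (fun l => Gam H l m a p * T (l :: nu) p)
    + christoffel_sum H (fun idx q => T (a :: idx) q) m nu p.
Proof.
  unfold christoffel_sum. cbn [length seq map sumR fold_right nth repl].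
  rewrite <- seq_shift, map_map. reflexivity.
Qed.

Definition const_field (w : list nat -> R) : tfield := fun idx _ => w idx.

Definition parallel H (k : nat) (T : tfield) : Prop := vanish (k + 1) (nabla H T).

Lemma nabla_const_field H w m nu p :
  nabla H (const_field w) (m :: nu) p = - christoffel_sum H (const_field w) m nu p.
Proof. rewrite nabla_cons. unfold const_field at 1. rewrite pd_const. ring. Qed.

Lemma repl_length nu i l : length (repl nu i l) = length nu.
Proof. revert i; induction nu as [|a nu IH]; intros [|i]; cbn; auto. Qed.

Lemma repl_lt4 nu i l : lt4 l -> Forall lt4 nu -> Forall lt4 (repl nu i l).
Proof.
  intros Hl Hnu; revert i; induction Hnu as [|a nu Ha Hnu IH]; intros [|i]; cbn;
  constructor; auto.
Qed.

Lemma nabla_agree H (T : tfield) (w : list nat -> R) k m nu p :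
  (forall idx q, length idx = k -> Forall lt4 idx -> T idx q = w idx) ->
  length nu = k -> Forall lt4 nu ->
  nabla H T (m :: nu) p = nabla H (const_field w) (m :: nu) p.
Proof.
  intros HT Hk Hnu. rewrite !nabla_cons.
  replace (T nu) with (const_field w nu)
    by (apply functional_extensionality; intro q; symmetry; auto).
  f_equal. unfold christoffel_sum. f_equal. apply map_ext. intro i. unfold sum4.
  rewrite !HT
    by first [rewrite repl_length; exact Hk | apply repl_lt4; [unfold lt4; lia | exact Hnu]].
  reflexivity.
Qed.

Lemma is_form_1 (f : tfield) : is_form 1 f.
Proof. intros idx p i j _ _ Hij. lia. Qed.

Lemma is_form_scale k (c : pt -> R) (w : list nat -> R) :
  is_form k (const_field w) -> is_form k (fun idx p => c p * w idx).
Proof.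
  intros Hw idx p i j Hl Hlt Hij.
  change (w (swapl idx i j)) with (const_field w (swapl idx i j) p).
  rewrite (Hw idx p i j) by assumption. unfold const_field. ring.
Qed.

Lemma is_form_dx2 a b : is_form 2 (const_field (dx2 a b)).
Proof.
  intros idx p i j Hl _ Hij.
  destruct idx as [|i0 [|i1 [|]]]; try discriminate.
  assert (i = 0 /\ j = 1)%nat as [-> ->] by lia. cbn. ring.
Qed.

Lemma is_form_dx3 a b c : is_form 3 (const_field (dx3 a b c)).
Proof.
  intros idx p i j Hl _ Hij.
  destruct idx as [|i0 [|i1 [|i2 [|]]]]; try discriminate.
  assert ((i = 0 /\ j = 1) \/ (i = 0 /\ j = 2) \/ (i = 1 /\ j = 2))%nat
    as [[-> ->]|[[-> ->]|[-> ->]]] by lia; cbn; ring.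
Qed.

Lemma vanish_Sym01 n T : vanish n T -> vanish n (Sym01 T).
Proof.
  intros HT idx p Hl Hlt.
  destruct idx as [|a [|b r]]; cbn; try (apply HT; assumption).
  inversion Hlt as [|? ? Ha Hbr]; inversion Hbr as [|? ? Hb Hr]; subst.
  rewrite !HT by (cbn in *; auto). ring.
Qed.

Lemma killing_yano_parallel H k T : is_form k T -> parallel H k T -> killing_yano H k T.
Proof. intros Hform Hpar. split; [exact Hform | exact (vanish_Sym01 _ _ Hpar)]. Qed.

Lemma nabla_u_scale H w m nu p :
  nabla H (fun idx q => q 0%nat * w idx) (m :: nu) p
  = delta 0 m * w nu + p 0%nat * nabla H (const_field w) (m :: nu) p.
Proof.
  rewrite !nabla_cons, pd_u_scale. unfold const_field at 1. rewrite pd_const.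
  rewrite (christoffel_sum_ext H _ (fun idx q => p 0%nat * const_field w idx q))
    by reflexivity.
  rewrite christoffel_sum_scale. ring.
Qed.

(* [sym_du_tensor w] is [Sym01 (du ⊗ w)]. *)
Definition sym_du_tensor (w : list nat -> R) : list nat -> R := fun idx =>
  match idx with
  | m :: x :: r => / 2 * (delta 0 m * w (x :: r) + delta 0 x * w (m :: r))
  | _ => 0
  end.

Lemma Sym01_nabla_u_parallel H k w idx p :
  parallel H (S k) (const_field w) -> length idx = S (S k) -> Forall lt4 idx ->
  Sym01 (nabla H (fun idx q => q 0%nat * w idx)) idx p = sym_du_tensor w idx.
Proof.
  intros Hw Hl Hlt.
  destruct idx as [|m [|x r]]; try discriminate.
  inversion Hlt as [|? ? Hm Hxr]; inversion Hxr as [|? ? Hx Hr]; subst.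
  cbn [Sym01 sym_du_tensor]. rewrite !nabla_u_scale.
  rewrite !(Hw _ p) by (cbn in *; auto || lia). ring.
Qed.

Lemma parallel_sym_du_tensor H k w :
  parallel H (S k) (const_field w) -> parallel H (S (S k)) (const_field (sym_du_tensor w)).
Proof.
  intros Hw idx p Hl Hlt.
  destruct idx as [|k0 [|m [|x r]]]; cbn in Hl; try lia.
  inversion Hlt as [|? ? Hk0 Hmxr]; inversion Hmxr as [|? ? Hm Hxr];
    inversion Hxr as [|? ? Hx Hr]; subst.
  pose proof (Hw (k0 :: x :: r) p ltac:(cbn in *; lia) ltac:(auto)) as Hwx.
  pose proof (Hw (k0 :: m :: r) p ltac:(cbn in *; lia) ltac:(auto)) as Hwm.
  rewrite nabla_const_field, christoffel_sum_cons in Hwx, Hwm.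
  (* Since [Gam^u = 0], the [du] factor is parallel and only the [w] factor is differentiated. *)
  assert (slot : forall a b,
    sum4 (fun l => Gam H l k0 a p * const_field (sym_du_tensor w) (l :: b :: r) p)
    = / 2 * delta 0 b * sum4 (fun l => Gam H l k0 a p * const_field w (l :: r) p)
    /\ sum4 (fun l => Gam H l k0 a p * const_field (sym_du_tensor w) (b :: l :: r) p)
    = / 2 * delta 0 b * sum4 (fun l => Gam H l k0 a p * const_field w (l :: r) p)).
  { intros a b. unfold sum4, const_field, sym_du_tensor. rewrite Gam_u. cbn. split; ring. }
  rewrite nabla_const_field, !christoffel_sum_cons, (proj1 (slot m x)), (proj2 (slot x m)).
  erewrite (christoffel_sum_ext H _
     (fun idx q => / 2 * delta 0 m * const_field w (x :: idx) q
                   + / 2 * delta 0 x * const_field w (m :: idx) q))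
    by (intro; unfold const_field, sym_du_tensor; ring).
  rewrite christoffel_sum_add, !christoffel_sum_scale.
  transitivity (/ 2 * delta 0 m * 0 + / 2 * delta 0 x * 0); [|ring].
  rewrite <- Hwx at 1. rewrite <- Hwm at 1. ring.
Qed.

Lemma affine_u_parallel H k w :
  is_form (S k) (const_field w) -> parallel H (S k) (const_field w) ->
  affine_form H (S k) (fun idx q => q 0%nat * w idx).
Proof.
  intros Hform Hw. split; [exact (is_form_scale _ _ _ Hform)|].
  intros idx p Hl Hlt. destruct idx as [|m nu]; [discriminate|].
  inversion Hlt as [|? ? Hm Hnu]; subst. cbn in Hl.
  rewrite (nabla_agree H _ (sym_du_tensor w) (S (S k)));
    [ | intros; apply (Sym01_nabla_u_parallel H k); auto | lia | exact Hnu].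
  apply (parallel_sym_du_tensor H k w Hw); cbn; [lia | auto].
Qed.

Lemma proper_u_parallel H k w idx :
  parallel H (S k) (const_field w) -> length idx = S (S k) -> Forall lt4 idx ->
  sym_du_tensor w idx <> 0 -> proper_form H (S k) (fun idx q => q 0%nat * w idx).
Proof.
  intros Hw Hl Hlt Hne Hv. apply Hne.
  rewrite <- (Sym01_nabla_u_parallel H k w idx (fun _ => 0)) by assumption.
  apply Hv; [lia | exact Hlt].
Qed.

Ltac christoffel_compute :=
  rewrite nabla_const_field; unfold christoffel_sum, sum4, const_field; cbn;
  rewrite ?Gam_u, ?(Gam_transverse _ 2), ?(Gam_transverse _ 3) by auto; cbn; ring.

Lemma parallel_du H : parallel H 1 (const_field (dx1 0)).
Proof.
  intros idx p Hl _. destruct idx as [|m [|n [|]]]; try discriminate.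
  christoffel_compute.
Qed.

Lemma parallel_du_dx H b : (b = 2 \/ b = 3)%nat -> parallel H 2 (const_field (dx2 0 b)).
Proof.
  intros Hb idx p Hl _. destruct idx as [|m [|n1 [|n2 [|]]]]; try discriminate.
  destruct Hb as [-> | ->]; christoffel_compute.
Qed.

Lemma parallel_du_dx_dy H : parallel H 3 (const_field (dx3 0 2 3)).
Proof.
  intros idx p Hl _. destruct idx as [|m [|n1 [|n2 [|n3 [|]]]]]; try discriminate.
  christoffel_compute.
Qed.

Lemma closed_u_du : closed_form 1 u_du.
Proof.
  intros idx p Hl _. destruct idx as [|m [|n [|]]]; try discriminate.
  unfold extd, u_du. cbn. rewrite !pd_u_scale. ring.
Qed.

Lemma proper_u_du_dx H b : (b = 2 \/ b = 3)%nat ->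
  proper_form H 2 (fun idx q => q 0%nat * dx2 0 b idx).
Proof.
  intros Hb. apply (proper_u_parallel H 1 _ [0; 0; b]%nat (parallel_du_dx H b Hb)).
  - reflexivity.
  - destruct Hb as [-> | ->]; repeat constructor; unfold lt4; lia.
  - destruct Hb as [-> | ->]; cbn; lra.
Qed.

Theorem mainTheorem10 (H : R -> R -> R -> R) (Hsmooth : smooth4 (Hf H)) :
  (affine_form H 1 u_du /\ closed_form 1 u_du)
  /\ (killing_yano H 2 du_dx /\ killing_yano H 2 du_dy)
  /\ (affine_form H 2 u_du_dx /\ proper_form H 2 u_du_dx
      /\ affine_form H 2 u_du_dy /\ proper_form H 2 u_du_dy)
  /\ affine_form H 3 u_du_dx_dy.
Proof.
  assert (Hx : (2 = 2 \/ 2 = 3)%nat) by auto.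
  assert (Hy : (3 = 2 \/ 3 = 3)%nat) by auto.
  refine (conj (conj _ _) (conj (conj _ _) (conj (conj _ (conj _ (conj _ _))) _))).
  - exact (affine_u_parallel H 0 _ (is_form_1 _) (parallel_du H)).
  - exact closed_u_du.
  - exact (killing_yano_parallel H 2 _ (is_form_dx2 0 2) (parallel_du_dx H 2 Hx)).
  - exact (killing_yano_parallel H 2 _ (is_form_dx2 0 3) (parallel_du_dx H 3 Hy)).
  - exact (affine_u_parallel H 1 _ (is_form_dx2 0 2) (parallel_du_dx H 2 Hx)).
  - exact (proper_u_du_dx H 2 Hx).
  - exact (affine_u_parallel H 1 _ (is_form_dx2 0 3) (parallel_du_dx H 3 Hy)).
  - exact (proper_u_du_dx H 3 Hy).
  - exact (affine_u_parallel H 2 _ (is_form_dx3 0 2 3) (parallel_du_dx_dy H)).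
Qed.
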